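(* Quet's sequence $A$ is a permutation of $\mathbb{N}$; that is, $A:\mathbb{N}\to\mathbb{N}$ is a bijection.
   Context: $\mathbb{N}=\{0,1,2,\dots\}$. Quet's sequence $A:\mathbb{N}\to\mathbb{N}$ is defined by $A(0)=0$, $A(1)=1$, and for $n\ge1$, $A(n+1)$ is the least natural number such that $A(n+1)\notin\{A(0),\dots,A(n)\}$ and $\sum_{0\le i\le n+1}A(i)\equiv 0 \pmod{n}$. First values: $A=0,1,2,3,6,4,9,5,12,14,7,17,8,20,\dots$. *)

From mathcomp Require Import all_boot.
Set Implicit Arguments. Unset Strict Implicit. Unset Printing Implicit Defensive.

Definition quet_ok (a : nat -> nat) (n v : nat) : Prop :=
  (forall i, i <= n -> a i <> v) /\ n %| (\sum_(0 <= i < n.+1) a i) + v.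

Definition IsQuet (a : nat -> nat) : Prop :=
  a 0 = 0 /\ a 1 = 1 /\
  forall n, 1 <= n ->
    quet_ok a n (a n.+1) /\ (forall v, quet_ok a n v -> a n.+1 <= v).

From mathcomp Require Import all_boot zify.

Set Implicit Arguments.
Unset Strict Implicit.
Unset Printing Implicit Defensive.

(* Existence: for any finite list s and any d > 0 some value outside s
   brings the sum of s to a multiple of d, so the least such value exists;
   iterating this choice on the list of previous terms builds the sequence.

   Bijectivity: injectivity is built into the definition.  For surjectivity
   we follow one invariant, quet_inv n Q: the partial sum a 0 + ... + a n
   equals (n - 1) * Q, every a i (i <= n) is below Q + n, and every value
   below Q already occurs.  Then Q <= a (n+1) <= Q + n while n divides
   a (n+1) - Q, so a (n+1) is either Q (and the invariant keeps Q) or Q + n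
   (and, by minimality, Q was already used, so the invariant moves to Q+1).
   Two consecutive steps cannot both keep Q, so Q grows without bound and
   every natural number eventually occurs. *)

Definition admissible (d : nat) (s : seq nat) (v : nat) : bool :=
  (v \notin s) && (d %| \sum_(x <- s) x + v).

(* For a positive modulus an admissible value always exists: pick a
   multiple of d exceeding both the sum and the maximum of s. *)
Lemma admissible_exists d s : 0 < d -> exists v, admissible d s v.
Proof.
move=> d_gt0; set S := \sum_(x <- s) x; set M := \max_(x <- s) x.
exists (d * (S + M + 1) - S); apply/andP; split.
  apply/negP=> v_in_s.
  have := @leq_bigmax_seq _ s predT id _ v_in_s isT; rewrite -/M; nia.
have -> : S + (d * (S + M + 1) - S) = d * (S + M + 1) by nia.
exact: dvdn_mulr.
Qed.

Definition next_term (k : nat) (s : seq nat) : nat :=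
  ex_minn (@admissible_exists k.+1 s (ltn0Sn k)).

(* quet_prefix k lists the first k + 2 terms of Quet's sequence. *)
Fixpoint quet_prefix (k : nat) : seq nat :=
  if k is k'.+1 then rcons (quet_prefix k') (next_term k' (quet_prefix k'))
  else [:: 0; 1].

Definition quet_seq (i : nat) : nat :=
  if i is j.+1 then last 0 (quet_prefix j) else 0.

Lemma quet_prefixE k : quet_prefix k = [seq quet_seq i | i <- iota 0 k.+2].
Proof.
elim: k => [//|k IH].
have -> : iota 0 k.+3 = iota 0 k.+2 ++ [:: k.+2] by rewrite -addn1 iotaD.
by rewrite /= -cats1 {1}IH map_cat /= /quet_seq /= last_rcons.
Qed.

Lemma quet_okE n v :
  quet_ok quet_seq n v <->
  admissible n [seq quet_seq i | i <- iota 0 n.+1] v.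
Proof.
rewrite /quet_ok /admissible big_map /index_iota subn0; split.
  move=> [fresh ->]; rewrite andbT; apply/mapP=> -[i].
  by rewrite mem_iota => /andP [_ lt_i] /esym; apply: fresh.
move=> /andP [/mapP fresh ->]; split=> // i le_i eq_v.
by apply: fresh; exists i; rewrite // mem_iota.
Qed.

Lemma quet_seq_IsQuet : IsQuet quet_seq.
Proof.
do 2!split=> //; case=> [//|k] _.
have -> : quet_seq k.+2 = next_term k (quet_prefix k).
  by rewrite /quet_seq /= last_rcons.
rewrite /next_term; case: ex_minnP => v adm_v least.
rewrite !quet_okE -quet_prefixE; split=> // w.
by rewrite quet_okE -quet_prefixE; apply: least.
Qed.

Lemma dvdn_le_cases d m : d %| m -> m <= d -> m = 0 \/ m = d.
Proof.
case: m => [|m] dvd_dm le_md; first by left.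
by right; apply/eqP; rewrite eqn_leq le_md dvdn_leq.
Qed.

Section QuetPermutation.

Variable a : nat -> nat.
Hypothesis quet_a : IsQuet a.

Let quet_step n : 1 <= n ->
  quet_ok a n (a n.+1) /\ (forall v, quet_ok a n v -> a n.+1 <= v).
Proof. by case: quet_a => _ [_]; apply. Qed.

Lemma quet_injective : injective a.
Proof.
have [a0 [a1 _]] := quet_a.
have before : forall i j, i < j -> a i <> a j.
  move=> i [//|[|j]] lt_ij; first by case: i lt_ij => // _; rewrite a0 a1.
  have [[fresh _] _] := quet_step (ltn0Sn j).
  by move=> eq_ij; apply: (fresh i); rewrite // -ltnS.
move=> i j eq_ij; case: (ltngtP i j) => // lt_ij.
  by case: (before _ _ lt_ij).
by case: (before _ _ lt_ij).
Qed.

Definition psum (n : nat) : nat := \sum_(0 <= i < n.+1) a i.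

Record quet_inv (n Q : nat) : Prop := QuetInv {
  inv_sum : psum n = (n - 1) * Q;
  inv_bound : forall i, i <= n -> a i < Q + n;
  inv_cover : forall v, v < Q -> exists2 i, i <= n & a i = v }.

Lemma inv_candidate n Q k : 0 < n -> quet_inv n Q ->
  (forall i, i <= n -> a i <> Q + k * n) -> quet_ok a n (Q + k * n).
Proof.
move=> n_gt0 [sum_n _ _] fresh; split=> //.
rewrite -/(psum n) sum_n.
have -> : (n - 1) * Q + (Q + k * n) = n * (Q + k) by nia.
exact: dvdn_mulr.
Qed.

(* The invariant starts at n = 2 with threshold 3, as a = 0, 1, 2, ... *)
Lemma quet_inv_base : quet_inv 2 3.
Proof.
have [a0 [a1 _]] := quet_a.
have [[fresh _] least] := quet_step (leqnn 1).
have a2 : a 2 = 2.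
  have := fresh 0 isT; have := fresh 1 isT; rewrite a0 a1.
  suff : a 2 <= 2 by lia.
  apply: least; split; last by rewrite dvd1n.
  by case=> [|[|]] //; rewrite ?a0 ?a1.
split.
- by rewrite /psum !big_nat_recr //= big_geq // a0 a1 a2.
- by case=> [|[|[|]]] //; rewrite ?a0 ?a1 ?a2.
- by case=> [|[|[|]]] // _; [exists 0 | exists 1 | exists 2].
Qed.

(* Since values below Q are used and Q + n is admissible, the next term
   lies in [Q, Q + n]; it is congruent to Q modulo n, hence Q or Q + n. *)
Lemma quet_next_cases n Q : 0 < n -> quet_inv n Q ->
  a n.+1 = Q \/ a n.+1 = Q + n.
Proof.
move=> n_gt0 inv; case: (inv) => sum_n bound cover.
have [[fresh dvd_next] least] := quet_step n_gt0.
have lo : Q <= a n.+1.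
  rewrite leqNgt; apply/negP=> /cover [i le_i ai]; exact: fresh le_i ai.
have hi : a n.+1 <= Q + 1 * n.
  by apply/least/inv_candidate => // i /bound; lia.
move: dvd_next; rewrite -/(psum n) sum_n.
have -> : (n - 1) * Q + a n.+1 = n * Q + (a n.+1 - Q) by nia.
by rewrite dvdn_addr ?dvdn_mulr // => /dvdn_le_cases; lia.
Qed.

(* The sequence only skips the threshold Q when Q is already used, since
   otherwise Q itself would be a smaller admissible value. *)
Lemma quet_skip_used n Q : 0 < n -> quet_inv n Q -> a n.+1 = Q + n ->
  exists2 i, i <= n & a i = Q.
Proof.
move=> n_gt0 inv aQn.
case: (boolP [exists i : 'I_n.+1, a i == Q]) => [/existsP [i /eqP ai]|].
  by exists i; rewrite // -ltnS.
rewrite negb_exists => /forallP unused.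
have [_ least] := quet_step n_gt0.
suff : a n.+1 <= Q + 0 * n by lia.
apply/least/inv_candidate => // i le_i ai.
by have := unused (@Ordinal n.+1 i le_i); rewrite /= ai addn0 eqxx.
Qed.

Lemma quet_inv_step n Q : 0 < n -> quet_inv n Q ->
  (a n.+1 = Q /\ quet_inv n.+1 Q) \/ (a n.+1 = Q + n /\ quet_inv n.+1 Q.+1).
Proof.
move=> n_gt0 inv; case: (inv) => sum_n bound cover.
have sum_next : psum n.+1 = psum n + a n.+1 by rewrite /psum big_nat_recr.
have bound_next Q' : Q <= Q' -> a n.+1 < Q' + n.+1 ->
    forall i, i <= n.+1 -> a i < Q' + n.+1.
  by move=> le_Q lt_next i; rewrite leq_eqVlt => /orP [/eqP -> | /bound]; lia.
case: (quet_next_cases n_gt0 inv) => [aQ | aQn].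
- left; split=> //; split.
  + by rewrite sum_next sum_n aQ; nia.
  + by apply: bound_next; lia.
  + by move=> v /cover [i le_i ai]; exists i => //; lia.
- right; split=> //; split.
  + by rewrite sum_next sum_n aQn; nia.
  + by apply: bound_next; lia.
  + move=> v; rewrite ltnS leq_eqVlt => /orP [/eqP -> | /cover [i le_i ai]].
      by case: (quet_skip_used n_gt0 inv aQn) => i le_i ai; exists i => //; lia.
    by exists i => //; lia.
Qed.

(* Two consecutive steps strictly raise the threshold: keeping Q twice
   would place the value Q twice. *)
Lemma quet_inv_rise n Q : 0 < n -> quet_inv n Q ->
  exists2 Q', quet_inv n.+2 Q' & Q < Q'.
Proof.
move=> n_gt0 inv.
have n1_gt0 : 0 < n.+1 by [].
case: (quet_inv_step n_gt0 inv) => [[aQ inv1] | [_ inv1]].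
  case: (quet_inv_step n1_gt0 inv1) => [[aQ' _] | [_ inv2]].
    by have := @quet_injective n.+1 n.+2; rewrite aQ aQ' => /(_ erefl); lia.
  by exists Q.+1.
case: (quet_inv_step n1_gt0 inv1) => [[_ inv2] | [_ inv2]].
  by exists Q.+1.
by exists Q.+2.
Qed.

Lemma quet_inv_unbounded y : exists n Q, [/\ 0 < n, quet_inv n Q & y < Q].
Proof.
elim: y => [|y [n [Q [n_gt0 inv lt_yQ]]]].
  by exists 2, 3; split=> //; exact: quet_inv_base.
case: (ltnP y.+1 Q) => [lt_y1Q | le_Qy1]; first by exists n, Q.
have [Q' inv' lt_QQ'] := quet_inv_rise n_gt0 inv.
by exists n.+2, Q'; split=> //; lia.
Qed.

Lemma quet_surjective y : exists i, a i == y.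
Proof.
have [n [Q [_ inv lt_yQ]]] := quet_inv_unbounded y.
by have [i _ ai] := inv_cover inv lt_yQ; exists i; apply/eqP.
Qed.

Lemma quet_bijective : bijective a.
Proof.
exists (fun y => ex_minn (quet_surjective y)) => [x | y];
  case: ex_minnP => i /eqP ai _ //.
exact: quet_injective.
Qed.

End QuetPermutation.

Theorem theorem9 :
  (exists a : nat -> nat, IsQuet a) /\
  (forall a : nat -> nat, IsQuet a -> bijective a).
Proof.
split; first by exists quet_seq; exact: quet_seq_IsQuet.
exact: quet_bijective.
Qed.
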